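(* Let $d\ge 3$ be odd. The group $G_d$ is neither torsion nor torsion-free: it contains elements of infinite order and nontrivial elements of finite order (namely the element $\xi_i=[a_{\overline{i+1}}^2,a_{\overline{i+2}}]\,([a_i,a_{\overline{i+1}}][a_{\overline{i+1}},a_{\overline{i+2}}])^{-1}$, which acts as $(i\ \overline{i+2})(\overline{i+1}\ \overline{i+3})$ on the first level with all first-level sections trivial, has order $3$ if $d=3$ and order $2$ if $d\ge5$).
   Context: Let $d\ge 3$, $X=\{1,\dots,d\}$, $T$ the $d$-regular rooted tree with vertex set $X^*$. $\mathrm{Aut}(T)$ is the group of root-preserving automorphisms with product left-to-right: $(gh)(u)=h(g(u))$. Sections $g|_u$ are defined by $g(uv)=g(u)\,g|_u(v)$; we write $g=(g|_1,\dots,g|_d)\lambda_g$ with $\lambda_g\in S_d$ the action on the first level; $e$ is the identity; $\overline{j}\in\{1,\dots,d\}$ denotes $j$ mod $d$. $G_d=\langle a_1,\dots,a_d\rangle\le\mathrm{Aut}(T)$ where $a_i$ acts on the first level as $(i\ \overline{i+1})$, with $a_i|_i=a_i$, $a_i|_{\overline{i+1}}=a_{\overline{i+1}}$, and $a_i|_x=e$ otherwise. Commutators: $[g,h]=g^{-1}h^{-1}gh$. *)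

From mathcomp Require Import all_boot all_fingroup.
Set Implicit Arguments. Unset Strict Implicit. Unset Printing Implicit Defensive.

(* Conventions: the alphabet X = {1,...,d} is represented by 'I_d = {0,...,d-1}
   (letter k+1 of the paper is the ordinal k).  The tree T has vertex set
   seq 'I_d (finite words).  Elements of Aut(T) are represented by functions
   seq 'I_d -> seq 'I_d; equality of automorphisms is extensional equality. *)

Lemma ord_pos d (i : 'I_d) : 0 < d.
Proof. by case: i => m Hm; apply: leq_ltn_trans Hm. Qed.

Definition osh d (i : 'I_d) (k : nat) : 'I_d :=
  Ordinal (ltn_pmod (i + k) (ord_pos i)).

Fixpoint gen_act d (i : 'I_d) (w : seq 'I_d) : seq 'I_d :=
  match w with
  | [::] => [::]
  | x :: w' =>
      if x == i then osh i 1 :: gen_act i w'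
      else if x == osh i 1 then i :: gen_act (osh i 1) w'
      else x :: w'
  end.

Fixpoint gen_inv d (i : 'I_d) (w : seq 'I_d) : seq 'I_d :=
  match w with
  | [::] => [::]
  | x :: w' =>
      if x == osh i 1 then i :: gen_inv i w'
      else if x == i then osh i 1 :: gen_inv (osh i 1) w'
      else x :: w'
  end.

(* Group words over the generators a_i; they denote the elements of G_d. *)
Inductive gword (d : nat) : Type :=
| GOne : gword d
| GGen : 'I_d -> gword d
| GInv : gword d -> gword d
| GMul : gword d -> gword d -> gword d.

(* eval false w = the automorphism denoted by w, eval true w = its inverse.
   Products are composed left to right: (gh)(u) = h(g(u)). *)
Fixpoint eval d (b : bool) (w : gword d) : seq 'I_d -> seq 'I_d :=
  match w with
  | GOne => id
  | GGen i => if b then gen_inv i else gen_act i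
  | GInv w' => eval (~~ b) w'
  | GMul w1 w2 => if b then eval b w1 \o eval b w2
                  else eval b w2 \o eval b w1
  end.

Definition geval d (w : gword d) := eval false w.

Definition gcomm d (g h : gword d) : gword d :=
  GMul (GMul (GMul (GInv g) (GInv h)) g) h.

Definition gsq d (g : gword d) := GMul g g.

Definition xi d (i : 'I_d) : gword d :=
  GMul (gcomm (gsq (GGen (osh i 1))) (GGen (osh i 2)))
       (GInv (GMul (gcomm (GGen i) (GGen (osh i 1)))
                   (gcomm (GGen (osh i 1)) (GGen (osh i 2))))).

Definition is_id d (f : seq 'I_d -> seq 'I_d) := forall u, f u = u.

Definition fpow d (f : seq 'I_d -> seq 'I_d) (n : nat) := iter n f.

Definition has_order d (f : seq 'I_d -> seq 'I_d) (k : nat) :=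
  0 < k /\ is_id (fpow f k) /\ (forall m, 0 < m < k -> ~ is_id (fpow f m)).

Definition Gd_torsion d :=
  forall g : gword d, exists2 n, 0 < n & is_id (fpow (geval g) n).

Definition Gd_torsion_free d :=
  forall g : gword d, ~ is_id (geval g) ->
    forall n, 0 < n -> ~ is_id (fpow (geval g) n).

(* Letters are numbered from 0.  Let b = a_0 a_1 ... a_(d-1) and c = a_0 a_(d-1) ... a_1
   (up_word and down_word).  On the first level b acts as the (d-1)-cycle
   1 -> d-1 -> d-2 -> ... -> 2 -> 1 and c as the (d-1)-cycle 0 -> 2 -> 3 -> ... -> d-1 -> 0.
   Collecting sections along these cycles, b^(d-1) fixes the vertex 1 with section
   a_1 c a_1^-1, and c^(d-1) fixes the vertex 0 with section b.  So b^m = 1 forces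
   (d-1) | m and c^(m/(d-1)) = 1, and symmetrically for c; by descent on m, b has infinite
   order.
   Pushing a letter through the fourteen generators of xi_i, all sections cancel, so xi_i
   acts on the first letter only, by (i+1 i+3)(i i+2): two disjoint transpositions when
   d >= 4, and the rotation x -> x+1 when d = 3. *)

From mathcomp Require Import all_boot all_fingroup cyclic zify.
Set Implicit Arguments. Unset Strict Implicit. Unset Printing Implicit Defensive.

Arguments osh : simpl never.
Arguments gen_act : simpl never.
Arguments gen_inv : simpl never.

Lemma osh_osh d (i : 'I_d) a b : osh (osh i a) b = osh i (a + b).
Proof. by apply: val_inj; rewrite /= modnDml addnA. Qed.

Lemma osh_oshS d (i : 'I_d) a : osh (osh i a) 1 = osh i a.+1.
Proof. by rewrite osh_osh addn1. Qed.

Lemma osh0 d (i : 'I_d) : osh i 0 = i.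
Proof. by apply: val_inj; rewrite /= addn0 modn_small. Qed.

Lemma osh_d d (i : 'I_d) : osh i d = i.
Proof. by apply: val_inj; rewrite /= modnDr modn_small. Qed.

Lemma eq_osh d (i : 'I_d) a b : a < d -> b < d -> (osh i a == osh i b) = (a == b).
Proof. by move=> ha hb; rewrite -val_eqE /= eqn_modDl !modn_small. Qed.

Lemma eq_osh0l d (i : 'I_d) a : a < d -> (i == osh i a) = (0 == a).
Proof. by move=> ha; have := eq_osh i (ord_pos i) ha; rewrite osh0. Qed.

Lemma eq_osh0r d (i : 'I_d) a : a < d -> (osh i a == i) = (a == 0).
Proof. by move=> ha; rewrite eq_sym eq_osh0l // eq_sym. Qed.

Lemma gen_act_cons d (j x : 'I_d) w : gen_act j (x :: w) =
  if x == j then osh j 1 :: gen_act j w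
  else if x == osh j 1 then j :: gen_act (osh j 1) w else x :: w.
Proof. by []. Qed.

Lemma gen_inv_cons d (j x : 'I_d) w : gen_inv j (x :: w) =
  if x == osh j 1 then j :: gen_inv j w
  else if x == j then osh j 1 :: gen_inv (osh j 1) w else x :: w.
Proof. by []. Qed.

Lemma gen_actK d (j : 'I_d) : cancel (gen_act j) (gen_inv j).
Proof.
move=> u; elim: u j => [|x u IH] j //.
rewrite gen_act_cons; case: eqP => [->|/eqP xj]; first by rewrite gen_inv_cons eqxx IH.
case: (x =P osh j 1) xj => [-> xj|/eqP xj1 xj] /=; rewrite gen_inv_cons.
  by rewrite eq_sym (negbTE xj) eqxx IH.
by rewrite (negbTE xj) (negbTE xj1).
Qed.

Lemma gen_invK d (j : 'I_d) : cancel (gen_inv j) (gen_act j).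
Proof.
move=> u; elim: u j => [|x u IH] j //.
rewrite gen_inv_cons; case: eqP => [->|/eqP xj1]; first by rewrite gen_act_cons eqxx IH.
case: (x =P j) xj1 => [-> xj1|/eqP xj xj1] /=; rewrite gen_act_cons.
  by rewrite eq_sym (negbTE xj1) eqxx IH.
by rewrite (negbTE xj) (negbTE xj1).
Qed.

Lemma geval_nil d (g : gword d) : geval g [::] = [::].
Proof.
rewrite /geval; elim: g false => [|j|g IH|g1 IH1 g2 IH2] [] //=.
all: by rewrite ?IH ?IH1 ?IH2.
Qed.

Lemma fpow_perm_cons d (f : seq 'I_d -> seq 'I_d) (s : {perm 'I_d}) :
  (forall x w, f (x :: w) = s x :: w) ->
  forall k x w, fpow f k (x :: w) = (s ^+ k)%g x :: w.
Proof.
move=> fs; elim=> [|k IH] x w; first by rewrite perm1.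
by rewrite expgSr permM /fpow iterS -/(fpow f k) IH fs.
Qed.

Lemma is_id_fpow_perm d (f : seq 'I_d -> seq 'I_d) (s : {perm 'I_d}) k :
  f [::] = [::] -> (forall x w, f (x :: w) = s x :: w) ->
  is_id (fpow f k) <-> (s ^+ k = 1)%g.
Proof.
move=> f_nil fs; split=> [fk | sk].
  by apply/permP=> x; have := fk [:: x]; rewrite (fpow_perm_cons fs) perm1 => -[].
case=> [|x w]; last by rewrite (fpow_perm_cons fs) sk perm1.
by rewrite /fpow; elim: k {sk} => //= k ->.
Qed.

Lemma has_order_perm d (f : seq 'I_d -> seq 'I_d) (s : {perm 'I_d}) :
  f [::] = [::] -> (forall x w, f (x :: w) = s x :: w) -> has_order f #[s]%g.
Proof.
move=> f_nil fs; split; first exact: order_gt0.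
split; first by apply/(is_id_fpow_perm _ f_nil fs); exact: expg_order.
move=> m /andP[m_gt0 m_lt] /(is_id_fpow_perm _ f_nil fs)/eqP.
by rewrite -order_dvdn => /(dvdn_leq m_gt0); rewrite leqNgt m_lt.
Qed.

Tactic Notation "tree_eval" "using" constr(facts) :=
  repeat progress (rewrite ?gen_act_cons ?gen_inv_cons ?osh_oshS ?osh_d ?facts
                     ?eqxx ?eq_osh ?eq_osh0l ?eq_osh0r //=);
  rewrite ?gen_actK ?gen_invK.
Tactic Notation "tree_eval" := tree_eval using eqxx.

Definition xi_perm d (i : 'I_d) : {perm 'I_d} :=
  (tperm (osh i 1) (osh i 3) * tperm i (osh i 2))%g.

Lemma xi_cons d (i x : 'I_d) w : 2 < d -> geval (xi i) (x :: w) = xi_perm i x :: w.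
Proof.
rewrite /geval /xi /gcomm /gsq /xi_perm /= permM !permE /=.
(* Separating d = 3 from d >= 4 makes the bounds a < d needed by eq_osh computable. *)
case: d i x w => [|[|[|[|n]]]] // i x w _.
all: have [->|/negbTE x0] := eqVneq x i; first by tree_eval.
all: have [->|/negbTE x1] := eqVneq x (osh i 1); first by tree_eval.
all: have [->|/negbTE x2] := eqVneq x (osh i 2); first by tree_eval.
all: have [->|/negbTE x3] := eqVneq x (osh i 3); first by tree_eval.
all: by tree_eval using (x0, x1, x2, x3).
Qed.

Lemma tperm_disjoint_commute (T : finType) (a b c e : T) :
  c != a -> e != a -> c != b -> e != b -> commute (tperm a b) (tperm c e).
Proof. by move=> ca ea cb eb; rewrite /commute conjgC tpermJ !tpermD. Qed.

Lemma xi_perm3 (i y : 'I_3) : xi_perm i y = osh y 1.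
Proof.
apply: val_inj; rewrite /xi_perm permM !permE.
by case: i => [[|[|[|//]]] hi]; case: y => [[|[|[|//]]] hy].
Qed.

Lemma order_xi_perm d (i : 'I_d) : 2 < d -> #[xi_perm i]%g = if d == 3 then 3 else 2.
Proof.
case: d i => [|[|[|[|n]]]] // i _.
  apply: nt_prime_order => //.
    by apply/permP=> x; rewrite perm1 permX /= !xi_perm3 !osh_osh osh_d.
  by apply/eqP => /permP/(_ i); rewrite perm1 xi_perm3 => /eqP; rewrite eq_osh0r.
apply: nt_prime_order => //.
  rewrite expgMn; first by rewrite !expg2 !tperm2 mulg1.
  by apply: tperm_disjoint_commute; rewrite ?eq_osh0l ?eq_osh.
apply/eqP => /permP/(_ i); rewrite perm1 permM !permE /= !eq_osh0l //= eqxx => /eqP.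
by rewrite eq_osh0r.
Qed.

Lemma iter_id_return (T : Type) (f g : seq T -> seq T) v p :
  0 < p ->
  (forall w, iter p f (v :: w) = v :: g w) ->
  (forall r w w', 0 < r < p -> iter r f (v :: w) <> v :: w') ->
  forall m, (forall u, iter m f u = u) -> p %| m /\ (forall u, iter (m %/ p) g u = u).
Proof.
move=> p_gt0 f_p f_r m f_m.
have f_qp q w : iter (q * p) f (v :: w) = v :: iter q g w.
  by elim: q w => [|q IH] w //; rewrite mulSn iterD IH f_p.
have f_m' w : iter (m %% p) f (v :: iter (m %/ p) g w) = v :: w.
  by rewrite -f_qp -iterD addnC -divn_eq f_m.
have r0 : m %% p = 0.
  apply/eqP; rewrite -leqn0 leqNgt; apply/negP => r_gt0.
  by apply: (f_r _ _ _ _ (f_m' [::])); rewrite r_gt0 ltn_mod.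
split; first by rewrite /dvdn r0.
by move=> u; have := f_m' u; rewrite r0 => -[].
Qed.

Lemma divisible_descent (P Q : nat -> Prop) p : 1 < p ->
  (forall m, P m -> p %| m /\ Q (m %/ p)) -> (forall m, Q m -> p %| m /\ P (m %/ p)) ->
  forall m, 0 < m -> ~ P m /\ ~ Q m.
Proof.
move=> p_gt1 PQ QP; elim/ltn_ind=> m IH m_gt0.
have smaller k : p %| k -> 0 < k -> 0 < k %/ p < k.
  move=> pk k_gt0; rewrite ltn_Pdiv // andbT divn_gt0; last exact: ltnW.
  exact: dvdn_leq.
split=> [/PQ [pm Qm] | /QP [pm Pm]]; have /andP[q_gt0 q_lt] := smaller m pm m_gt0.
  by case: (IH _ q_lt q_gt0) => _ /(_ Qm).
by case: (IH _ q_lt q_gt0) => /(_ Pm).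
Qed.

Lemma iter_conj_id (T : Type) (f g h k : T -> T) : cancel k h ->
  (forall u, f (h u) = h (g u)) ->
  forall m, (forall u, iter m g u = u) -> forall u, iter m f u = u.
Proof.
move=> kK fhg m g_m u.
have iter_h v : iter m f (h v) = h (iter m g v) by elim: m {g_m} => //= m ->; apply: fhg.
by rewrite -(kK u) iter_h g_m.
Qed.

Lemma iota_rcons m k : iota m k.+1 = rcons (iota m k) (m + k).
Proof. by rewrite -addn1 iotaD cats1. Qed.

Lemma iota_split m k l : iota m (k + l.+1) = iota m k ++ (m + k) :: iota (m + k).+1 l.
Proof. by rewrite iotaD. Qed.

Section InfiniteOrder.

Variable n : nat.
Local Notation d := n.+3.

Definition letter k : 'I_d := osh ord0 k.

Fixpoint gprod (s : seq nat) : gword d :=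
  if s is j :: s' then GMul (GGen (letter j)) (gprod s') else GOne d.

Local Notation a j := (gen_act (letter j)).
Local Notation act s := (geval (gprod s)).

Lemma osh_letter k : osh (letter k) 1 = letter k.+1.
Proof. exact: osh_oshS. Qed.

Lemma val_letter k : val (letter k) = k %% d.
Proof. by []. Qed.

Lemma letter_d : letter d = letter 0.
Proof. by apply: val_inj; rewrite !val_letter modnn. Qed.

Lemma letterS_neq j : (letter j.+1 == letter j) = false.
Proof. by rewrite -val_eqE !val_letter -addn1 -[X in _ == X %[mod d]]addn0 eqn_modDl. Qed.

Lemma eq_letter j k : j < d -> k < d -> (letter j == letter k) = (j == k).
Proof. exact: eq_osh. Qed.

Lemma act_cons j s u : act (j :: s) u = act s (a j u).
Proof. by []. Qed.

Lemma act_cat s1 s2 u : act (s1 ++ s2) u = act s2 (act s1 u).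
Proof. by elim: s1 u => //= j s1 IH u; rewrite act_cons IH. Qed.

Lemma act_rcons s j u : act (rcons s j) u = a j (act s u).
Proof. by rewrite -cats1 act_cat. Qed.

Lemma a_letter j w : a j (letter j :: w) = letter j.+1 :: a j w.
Proof. by rewrite gen_act_cons eqxx osh_letter. Qed.

Lemma a_letterS j w : a j (letter j.+1 :: w) = letter j :: a j.+1 w.
Proof. by rewrite gen_act_cons osh_letter letterS_neq eqxx. Qed.

Lemma a_fix j x w : letter x != letter j -> letter x != letter j.+1 ->
  a j (letter x :: w) = letter x :: w.
Proof. by move=> /negbTE xj /negbTE xj1; rewrite gen_act_cons osh_letter xj xj1. Qed.

Lemma a_last_fix x w : 0 < x < n.+2 -> a n.+2 (letter x :: w) = letter x :: w.
Proof. by move=> hx; rewrite a_fix // ?letter_d eq_letter //; lia. Qed.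

Lemma act_fix s x w : x < d -> (forall j, j \in s -> [&& j < n.+2, x != j & x != j.+1]) ->
  act s (letter x :: w) = letter x :: w.
Proof.
move=> hx; elim: s => //= j s IH hs; rewrite act_cons.
have /and3P[hj xj xj1] := hs j (mem_head j s).
rewrite a_fix ?eq_letter ?IH // => [k ks|]; [exact/hs/mem_behead | lia].
Qed.

Definition up_word : gword d := gprod (iota 0 d).
Definition down_word : gword d := gprod (0 :: rev (iota 1 n.+2)).
Definition down_conj_word : gword d := gprod (1 :: 0 :: rev (iota 2 n.+1)).

Local Notation up := (geval up_word).
Local Notation down := (geval down_word).

Ltac in_range := move=> ?; rewrite ?mem_rev ?mem_iota; lia.

Lemma up_letter1 w : up (letter 1 :: w) = letter n.+2 :: act [:: 1; 0] w.
Proof.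
rewrite /up_word iota_rcons act_rcons -[iota 0 _]/(0 :: iota 1 n.+1) act_cons a_letterS.
rewrite act_fix; [|by []|in_range].
by rewrite -letter_d a_letterS letter_d.
Qed.

Lemma up_letterSS m w : m <= n -> up (letter m.+2 :: w) = letter m.+1 :: a m.+2 w.
Proof.
move=> mn; rewrite /up_word iota_rcons add0n act_rcons.
have -> : iota 0 n.+2 = iota 0 m.+1 ++ m.+1 :: iota m.+2 (n - m).
  by rewrite (_ : n.+2 = m.+1 + (n - m).+1) ?iota_split //; lia.
rewrite act_cat act_fix; [|lia|in_range].
rewrite act_cons a_letterS act_fix; [|lia|in_range].
by rewrite a_last_fix //; lia.
Qed.

Lemma rev_iota1 : rev (iota 1 n.+2) = n.+2 :: rev (iota 1 n.+1).
Proof. by rewrite iota_rcons rev_rcons. Qed.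

Lemma down_letter0 w : down (letter 0 :: w) = letter 2 :: act [:: 0; 1] w.
Proof.
rewrite /down_word act_cons a_letter rev_iota1 act_cons a_last_fix //.
rewrite -[iota 1 _]/(1 :: iota 2 n) rev_cons act_rcons act_fix; [|by []|in_range].
by rewrite a_letter.
Qed.

Lemma down_letterSS m w : m < n -> down (letter m.+2 :: w) = letter m.+3 :: a m.+2 w.
Proof.
move=> mn; rewrite /down_word act_cons a_fix ?eq_letter //; try lia.
rewrite rev_iota1 act_cons a_last_fix; last by lia.
have -> : iota 1 n.+1 = iota 1 m.+1 ++ m.+2 :: iota m.+3 (n - m.+1).
  by rewrite (_ : n.+1 = m.+1 + (n - m.+1).+1) ?iota_split //; lia.
rewrite rev_cat rev_cons cat_rcons act_cat act_fix; [|lia|in_range].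
by rewrite act_cons a_letter act_fix; [|lia|in_range].
Qed.

Lemma down_letter_last w : down (letter n.+2 :: w) = letter 0 :: a n.+2 w.
Proof.
rewrite /down_word act_cons a_fix ?eq_letter //.
by rewrite rev_iota1 act_cons a_letter letter_d act_fix; [|by []|in_range].
Qed.

Lemma down_conj u : down (a 1 u) = a 1 (geval down_conj_word u).
Proof.
by rewrite -act_rcons /down_word /down_conj_word -[iota 1 _]/(1 :: iota 2 n.+1) rev_cons.
Qed.

Lemma iter_up r w : r <= n.+1 ->
  iter r.+1 up (letter 1 :: w) = letter (n.+2 - r) :: act (1 :: 0 :: rev (iota (n.+3 - r) r)) w.
Proof.
elim: r => [|r IH] hr; first exact: up_letter1.
rewrite iterS IH; last by lia.
have -> : n.+2 - r = (n - r).+2 by lia.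
have -> : n.+3 - r = (n - r).+3 by lia.
have -> : n.+3 - r.+1 = (n - r).+2 by lia.
rewrite up_letterSS; last by lia.
by rewrite subSS subSn; [rewrite -[iota _ r.+1]/(_ :: _) rev_cons -!rcons_cons act_rcons | lia].
Qed.

Lemma iter_down r w : r <= n -> iter r.+1 down (letter 0 :: w) = letter r.+2 :: act (iota 0 r.+2) w.
Proof.
elim: r => [|r IH] hr; first exact: down_letter0.
by rewrite iterS IH ?down_letterSS ?iota_rcons ?act_rcons //; lia.
Qed.

Lemma up_period w : iter n.+2 up (letter 1 :: w) = letter 1 :: geval down_conj_word w.
Proof. by rewrite iter_up // subSnn (_ : n.+3 - n.+1 = 2) //; lia. Qed.

Lemma down_period w : iter n.+2 down (letter 0 :: w) = letter 0 :: up w.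
Proof. by rewrite iterS iter_down // down_letter_last /up_word [in RHS]iota_rcons act_rcons. Qed.

Lemma up_no_return r w w' : 0 < r < n.+2 -> iter r up (letter 1 :: w) <> letter 1 :: w'.
Proof.
case: r => // r hr; rewrite iter_up; last by lia.
by move/(congr1 (head ord0)) => /= /eqP; rewrite eq_letter //; lia.
Qed.

Lemma down_no_return r w w' : 0 < r < n.+2 -> iter r down (letter 0 :: w) <> letter 0 :: w'.
Proof.
case: r => // r hr; rewrite iter_down; last by lia.
by move/(congr1 (head ord0)) => /= /eqP; rewrite eq_letter //; lia.
Qed.

Lemma up_word_infinite_order m : 0 < m -> ~ is_id (fpow (geval up_word) m).
Proof.
have up_down k : (forall u, iter k up u = u) ->
    n.+2 %| k /\ (forall u, iter (k %/ n.+2) down u = u).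
  move=> up_k; have [nk conj_id] := iter_id_return (ltn0Sn _) (@up_period) (@up_no_return) up_k.
  split=> //.
  exact: iter_conj_id (@gen_invK _ (letter 1)) down_conj _ conj_id.
have down_up k : (forall u, iter k down u = u) ->
    n.+2 %| k /\ (forall u, iter (k %/ n.+2) up u = u).
  by move=> down_k; apply: iter_id_return (ltn0Sn _) (@down_period) (@down_no_return) _ down_k.
by move=> m_gt0; case: (divisible_descent _ up_down down_up m_gt0).
Qed.

End InfiniteOrder.

Lemma Gd_not_torsion n : ~ Gd_torsion n.+3.
Proof. by move=> /(_ (up_word n)) [m m_gt0]; apply: up_word_infinite_order. Qed.

Lemma xi_has_order d (i : 'I_d) : 2 < d ->
  has_order (geval (xi i)) (if d == 3 then 3 else 2).
Proof.
move=> d_gt2; rewrite -(order_xi_perm i d_gt2).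
exact: has_order_perm (geval_nil _) (fun x w => xi_cons i x w d_gt2).
Qed.

Lemma xi_nontrivial d (i : 'I_d) : 2 < d -> ~ is_id (geval (xi i)).
Proof.
move=> d_gt2 /(is_id_fpow_perm 1 (geval_nil _) (fun x w => xi_cons i x w d_gt2)).
by rewrite expg1 => /eqP; rewrite -order_eq1 order_xi_perm //; case: ifP.
Qed.

Theorem mainTheorem13 (d : nat) (hd : 3 <= d) (hodd : odd d) :
  ~ Gd_torsion d /\ ~ Gd_torsion_free d /\
  (forall i : 'I_d,
     ~ is_id (geval (xi i)) /\
     (forall (x : 'I_d) (w : seq 'I_d),
        geval (xi i) (x :: w)
        = (tperm (osh i 1) (osh i 3) * tperm i (osh i 2))%g x :: w) /\
     has_order (geval (xi i)) (if d == 3 then 3 else 2)).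
Proof.
split; first by case: d hd {hodd} => [|[|[|n]]] // _; apply: Gd_not_torsion.
split.
  have i : 'I_d := Ordinal (ltnW hd).
  have [k_gt0 [xi_k _]] := xi_has_order i hd.
  by move=> /(_ (xi i) (@xi_nontrivial _ i hd) _ k_gt0).
move=> i; split; first exact: xi_nontrivial.
by split; [move=> x w; exact: xi_cons | exact: xi_has_order].
Qed.
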